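(* For $\xi = (\tau_L,\delta_L,\tau_R,\delta_R) \in \mathbb{R}^4$ let $f_\xi:\mathbb{R}^2\to\mathbb{R}^2$ be $$f_\xi(x,y) = \begin{cases} (\tau_L x + y + 1,\ -\delta_L x), & x \le 0,\\ (\tau_R x + y + 1,\ -\delta_R x), & x \ge 0.\end{cases}$$ Let $\Phi = \{\xi \in \mathbb{R}^4 : \tau_L > |\delta_L + 1|,\ \tau_R < -|\delta_R+1|\}$, $\alpha(\xi) = \tau_L\tau_R + (\delta_L - 1)(\delta_R - 1)$, and $\mathcal{P}_2 = \{\xi \in \Phi : \delta_L\delta_R < 1,\ \alpha(\xi) > 0\}$. If $\xi \in \mathcal{P}_2$, then $f_\xi$ has an asymptotically stable $LR$-cycle, i.e. an asymptotically stable period-two orbit $\{P,Q\}$ with $P$ in the left half-plane $x<0$ and $Q$ in the right half-plane $x>0$. *)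

From Stdlib Require Import Reals.
Open Scope R_scope.

(* The border-collision normal form f_xi, xi = (tL, dL, tR, dR).
   Both branches agree on x = 0, so using the left branch there is harmless. *)
Definition bcnf (tL dL tR dR : R) (p : R * R) : R * R :=
  let (x, y) := p in
  if Rle_dec x 0 then (tL * x + y + 1, - dL * x)
  else (tR * x + y + 1, - dR * x).

Definition iter_map (g : R * R -> R * R) (n : nat) (z : R * R) : R * R :=
  Nat.iter n g z.

Definition dist2 (p q : R * R) : R :=
  sqrt ((fst p - fst q) ^ 2 + (snd p - snd q) ^ 2).

Definition dist_orbit (z P Q : R * R) : R := Rmin (dist2 z P) (dist2 z Q).

Definition period_two_orbit (g : R * R -> R * R) (P Q : R * R) : Prop :=
  g P = Q /\ g Q = P /\ P <> Q.

Definition lyapunov_stable_orbit (g : R * R -> R * R) (P Q : R * R) : Prop :=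
  forall eps, eps > 0 -> exists delta, delta > 0 /\
    forall z, dist_orbit z P Q < delta ->
      forall n, dist_orbit (iter_map g n z) P Q < eps.

Definition attracting_orbit (g : R * R -> R * R) (P Q : R * R) : Prop :=
  exists eta, eta > 0 /\
    forall z, dist_orbit z P Q < eta ->
      Un_cv (fun n => dist_orbit (iter_map g n z) P Q) 0.

Definition asymptotically_stable_orbit (g : R * R -> R * R) (P Q : R * R) : Prop :=
  lyapunov_stable_orbit g P Q /\ attracting_orbit g P Q.

Definition LR_cycle (g : R * R -> R * R) (P Q : R * R) : Prop :=
  period_two_orbit g P Q /\ fst P < 0 /\ fst Q > 0.

(* Near P (in x < 0) and Q (in x > 0) the map is affine: f (P + e) = Q + A_L e and
   f (Q + e) = P + A_R e, so deviations along the cycle evolve linearly, and every two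
   steps by M = A_R A_L, of trace T = tL tR - dL - dR and determinant d = dL dR.
   The hypotheses are exactly Jury's conditions d < 1 and |T| < 1 + d, since
   1 + d + T = alpha and 1 + d - T = (1 + dL) (1 + dR) - tL tR > 0.  Under them the
   companion recurrence u (k + 2) = T u (k + 1) - d u k has a quadratic Lyapunov form;
   by Cayley-Hamilton both coordinates of M^k e obey this recurrence, which gives a
   quadratic V with V (M e) <= l V e, l < 1.  Squared distances to the cycle then decay
   like l ^ (n / 2), whence stability and attraction. *)

From Stdlib Require Import Reals Lra Lia.
Open Scope R_scope.

Definition sqnorm (e : R * R) : R := fst e ^ 2 + snd e ^ 2.
Definition padd (p e : R * R) : R * R := (fst p + fst e, snd p + snd e).

Lemma sqnorm_ge0 e : 0 <= sqnorm e.
Proof. unfold sqnorm; nra. Qed.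

Lemma dist_orbit_ge0 z P Q : 0 <= dist_orbit z P Q.
Proof. unfold dist_orbit, Rmin; destruct (Rle_dec _ _); apply sqrt_pos. Qed.

Lemma sq_lt_of_lt_sqrt x y : 0 <= x -> 0 <= y -> x < sqrt y -> x ^ 2 < y.
Proof. intros hx hy h; pose proof (pow2_sqrt y hy); nra. Qed.

Lemma sq_le_of_le_sqrt x y : 0 <= x -> 0 <= y -> x <= sqrt y -> x ^ 2 <= y.
Proof. intros hx hy h; rewrite <- (pow2_sqrt y hy); apply pow_incr; lra. Qed.

Lemma lt_of_sq_lt x y : 0 <= x -> 0 < y -> x ^ 2 < y ^ 2 -> x < y.
Proof. intros; nra. Qed.

Lemma pow_le_1 x n : 0 <= x <= 1 -> x ^ n <= 1.
Proof. intros hx; rewrite <- (pow1 n); apply pow_incr; lra. Qed.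

Lemma pow_le_pow_of_le_1 x m n : 0 <= x <= 1 -> (m <= n)%nat -> x ^ n <= x ^ m.
Proof.
  intros hx hmn.
  replace n with (m + (n - m))%nat by lia; rewrite pow_add.
  pose proof (pow_le_1 x (n - m) hx); pose proof (pow_le x m (proj1 hx)); nra.
Qed.

Lemma div2_succ_le n : (Nat.div2 (S n) <= S (Nat.div2 n))%nat.
Proof.
  pose proof (Nat.div2_odd n) as hn; pose proof (Nat.div2_odd (S n)) as hSn.
  destruct (Nat.odd n), (Nat.odd (S n)); simpl in *; lia.
Qed.

Lemma pow_div2_eventually_lt l y : 0 <= l < 1 -> 0 < y ->
  exists N, forall n, (N <= n)%nat -> l ^ Nat.div2 n < y.
Proof.
  intros hl hy.
  destruct (pow_lt_1_zero l ltac:(rewrite Rabs_right; lra) y hy) as [N HN].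
  exists (2 * N)%nat; intros n hn.
  assert (hk : (N <= Nat.div2 n)%nat) by (apply Nat.div2_le_lower_bound; lia).
  specialize (HN _ hk); rewrite Rabs_right in HN; [lra|].
  apply Rle_ge, pow_le; lra.
Qed.

Lemma dist_orbit_padd_l_sq P Q e : dist_orbit (padd P e) P Q ^ 2 <= sqnorm e.
Proof.
  apply sq_le_of_le_sqrt; [apply dist_orbit_ge0 | apply sqnorm_ge0 |].
  replace (sqrt (sqnorm e)) with (dist2 (padd P e) P)
    by (unfold dist2, sqnorm, padd; simpl; f_equal; ring).
  apply Rmin_l.
Qed.

Lemma dist_orbit_padd_r_sq P Q e : dist_orbit (padd Q e) P Q ^ 2 <= sqnorm e.
Proof.
  apply sq_le_of_le_sqrt; [apply dist_orbit_ge0 | apply sqnorm_ge0 |].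
  replace (sqrt (sqnorm e)) with (dist2 (padd Q e) Q)
    by (unfold dist2, sqnorm, padd; simpl; f_equal; ring).
  apply Rmin_r.
Qed.

Lemma dist_orbit_cases z P Q :
  exists e, (z = padd P e \/ z = padd Q e) /\ dist_orbit z P Q ^ 2 = sqnorm e.
Proof.
  unfold dist_orbit, Rmin, dist2.
  destruct (Rle_dec _ _) as [_ | _].
  - exists (fst z - fst P, snd z - snd P); split.
    + left; destruct z as [x y]; unfold padd; simpl; f_equal; ring.
    + rewrite pow2_sqrt; [reflexivity | apply Rplus_le_le_0_compat; apply pow2_ge_0].
  - exists (fst z - fst Q, snd z - snd Q); split.
    + right; destruct z as [x y]; unfold padd; simpl; f_equal; ring.
    + rewrite pow2_sqrt; [reflexivity | apply Rplus_le_le_0_compat; apply pow2_ge_0].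
Qed.

Definition decays_to_orbit (g : R * R -> R * R) (P Q : R * R) (rho A l : R) : Prop :=
  forall z, dist_orbit z P Q ^ 2 < rho -> forall n,
    dist_orbit (iter_map g n z) P Q ^ 2 <= A * l ^ Nat.div2 n * dist_orbit z P Q ^ 2.

Section DecayToOrbit.

Variable g : R * R -> R * R.
Variables P Q : R * R.
Variables rho A l : R.

Hypothesis rho_pos : 0 < rho.
Hypothesis A_ge0 : 0 <= A.
Hypothesis l_range : 0 <= l < 1.
Hypothesis decay : decays_to_orbit g P Q rho A l.

Lemma lyapunov_stable_of_decay : lyapunov_stable_orbit g P Q.
Proof.
  intros eps heps.
  set (rho' := Rmin rho (eps ^ 2 / (A + 1))).
  assert (hrho' : 0 < rho') by (apply Rmin_glb_lt; [lra | apply Rdiv_lt_0_compat; nra]).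
  exists (sqrt rho'); split; [apply sqrt_lt_R0; lra |].
  intros z hz n.
  pose proof (dist_orbit_ge0 z P Q).
  assert (hz2 := sq_lt_of_lt_sqrt _ _ (dist_orbit_ge0 z P Q) (Rlt_le _ _ hrho') hz).
  assert (hsmall : dist_orbit z P Q ^ 2 * (A + 1) < eps ^ 2).
  { assert (h := Rmin_r rho (eps ^ 2 / (A + 1))); fold rho' in h.
    apply (Rlt_le_trans _ (eps ^ 2 / (A + 1) * (A + 1))); [nra | right; field; lra]. }
  assert (hn := decay z (Rlt_le_trans _ _ _ hz2 (Rmin_l _ _)) n).
  pose proof (pow_le_1 l (Nat.div2 n) ltac:(lra)); pose proof (pow_le l (Nat.div2 n) (proj1 l_range)).
  apply lt_of_sq_lt; [apply dist_orbit_ge0 | lra |].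
  assert (A * l ^ Nat.div2 n * dist_orbit z P Q ^ 2 <= A * dist_orbit z P Q ^ 2).
  { rewrite Rmult_assoc; apply Rmult_le_compat_l; [lra |]; nra. }
  nra.
Qed.

Lemma attracting_of_decay : attracting_orbit g P Q.
Proof.
  exists (sqrt rho); split; [apply sqrt_lt_R0; lra |].
  intros z hz eps heps.
  assert (hz2 := sq_lt_of_lt_sqrt _ _ (dist_orbit_ge0 z P Q) (Rlt_le _ _ rho_pos) hz).
  assert (hArho : 0 < A * rho + 1) by nra.
  assert (hy : 0 < eps ^ 2 / (A * rho + 1)) by (apply Rdiv_lt_0_compat; nra).
  destruct (pow_div2_eventually_lt l _ l_range hy) as [N HN].
  exists N; intros n hn; specialize (HN n hn).
  unfold Rdist; rewrite Rminus_0_r, Rabs_right by (apply Rle_ge, dist_orbit_ge0).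
  pose proof (decay z hz2 n); pose proof (dist_orbit_ge0 (iter_map g n z) P Q).
  pose proof (pow_le l (Nat.div2 n) (proj1 l_range)).
  assert (l ^ Nat.div2 n * (A * rho + 1) < eps ^ 2).
  { apply (Rlt_le_trans _ (eps ^ 2 / (A * rho + 1) * (A * rho + 1))); [nra | right; field; lra]. }
  assert (A * l ^ Nat.div2 n * dist_orbit z P Q ^ 2 <= A * l ^ Nat.div2 n * rho)
    by (apply Rmult_le_compat_l; [apply Rmult_le_pos |]; lra).
  nra.
Qed.

Lemma asymptotically_stable_of_decay : asymptotically_stable_orbit g P Q.
Proof. split; [exact lyapunov_stable_of_decay | exact attracting_of_decay]. Qed.

End DecayToOrbit.

Section LocallyAffineTwoCycle.

Variable g : R * R -> R * R.
Variables P Q : R * R.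
Variables AL AR : R * R -> R * R.
Variable V : R * R -> R.
Variables r c K l : R.

Hypothesis r_pos : 0 < r.
Hypothesis c_ge1 : 1 <= c.
Hypothesis AL_bounded : forall e, sqnorm (AL e) <= c * sqnorm e.
Hypothesis AR_bounded : forall e, sqnorm (AR e) <= c * sqnorm e.
Hypothesis V_bounds : forall e, sqnorm e <= V e <= K * sqnorm e.
Hypothesis l_range : 0 < l < 1.
Hypothesis V_contracts : forall e, V (AR (AL e)) <= l * V e.
Hypothesis g_near_P : forall e, sqnorm e < r -> g (padd P e) = padd Q (AL e).
Hypothesis g_near_Q : forall e, sqnorm e < r -> g (padd Q e) = padd P (AR e).

Let M (e : R * R) : R * R := AR (AL e).

Lemma V_ge0 e : 0 <= V e.
Proof. pose proof (V_bounds e); pose proof (sqnorm_ge0 e); lra. Qed.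

Lemma K_ge1 : 1 <= K.
Proof. pose proof (V_bounds (1, 0)); unfold sqnorm in *; simpl in *; lra. Qed.

Lemma V_iter_M k e : V (Nat.iter k M e) <= l ^ k * V e.
Proof.
  induction k as [|k IH]; simpl; [lra |].
  apply (Rle_trans _ (l * V (Nat.iter k M e))); [apply V_contracts |].
  rewrite Rmult_assoc; apply Rmult_le_compat_l; lra.
Qed.

Lemma V_iter_M_le k e : V (Nat.iter k M e) <= V e.
Proof.
  pose proof (V_iter_M k e); pose proof (V_ge0 e).
  pose proof (pow_le l k); pose proof (pow_le_1 l k).
  nra.
Qed.

Lemma iter_even_near_P e : c * V e < r ->
  forall k, iter_map g (2 * k) (padd P e) = padd P (Nat.iter k M e).
Proof.
  intros he k; induction k as [|k IH]; [reflexivity |].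
  replace (2 * S k)%nat with (S (S (2 * k))) by lia.
  change (g (g (iter_map g (2 * k) (padd P e))) = padd P (M (Nat.iter k M e))).
  set (x := Nat.iter k M e) in *.
  assert (hx : c * sqnorm x < r).
  { assert (V x <= V e) by apply V_iter_M_le.
    assert (sqnorm x <= V x) by apply V_bounds.
    assert (c * sqnorm x <= c * V e) by (apply Rmult_le_compat_l; lra).
    lra. }
  rewrite IH, g_near_P, g_near_Q; [reflexivity | |].
  - pose proof (AL_bounded x); lra.
  - pose proof (sqnorm_ge0 x); nra.
Qed.

Lemma iter_odd_near_P e : c * V e < r ->
  forall k, iter_map g (S (2 * k)) (padd P e) = padd Q (AL (Nat.iter k M e)).
Proof.
  intros he k.
  change (g (iter_map g (2 * k) (padd P e)) = padd Q (AL (Nat.iter k M e))).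
  rewrite iter_even_near_P by exact he; apply g_near_P.
  pose proof (V_bounds (Nat.iter k M e)); pose proof (V_iter_M_le k e); pose proof (V_ge0 e).
  nra.
Qed.

Lemma decay_near_P e : c * V e < r -> forall n,
  dist_orbit (iter_map g n (padd P e)) P Q ^ 2 <= c * l ^ Nat.div2 n * V e.
Proof.
  intros he n.
  pose proof (pow_le l); pose proof (V_ge0 e).
  destruct (Nat.Even_or_Odd n) as [[k ->] | [k ->]].
  - rewrite Nat.div2_double, iter_even_near_P by exact he.
    pose proof (dist_orbit_padd_l_sq P Q (Nat.iter k M e)).
    pose proof (V_bounds (Nat.iter k M e)); pose proof (V_iter_M k e).
    assert (l ^ k * V e <= c * l ^ k * V e) by (specialize (H k); nra).
    lra.
  - rewrite Nat.add_1_r, Nat.div2_succ_double, iter_odd_near_P by exact he.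
    pose proof (dist_orbit_padd_r_sq P Q (AL (Nat.iter k M e))).
    pose proof (AL_bounded (Nat.iter k M e)).
    pose proof (V_bounds (Nat.iter k M e)); pose proof (V_iter_M k e).
    assert (c * sqnorm (Nat.iter k M e) <= c * (l ^ k * V e)) by (apply Rmult_le_compat_l; lra).
    lra.
Qed.

Lemma decay_rate_ge : c * K <= c * c * K / l.
Proof.
  pose proof K_ge1.
  apply (Rmult_le_reg_r l); [lra |].
  replace (c * c * K / l * l) with (c * c * K) by (field; lra).
  assert (0 <= c * K) by nra.
  assert (c * K * l <= c * K) by nra.
  assert (c * K <= c * K * c) by nra.
  lra.
Qed.

Lemma decay_near_Q e : c * c * K * sqnorm e < r -> forall n,
  dist_orbit (iter_map g n (padd Q e)) P Q ^ 2 <= c * c * K / l * l ^ Nat.div2 n * sqnorm e.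
Proof.
  intros he n.
  pose proof (sqnorm_ge0 e); pose proof K_ge1; pose proof decay_rate_ge.
  assert (hcK : 1 <= c * c * K) by (assert (1 <= c * c) by nra; nra).
  assert (sqnorm e <= c * c * K * sqnorm e)
    by (rewrite <- (Rmult_1_l (sqnorm e)) at 1; apply Rmult_le_compat_r; lra).
  destruct n as [|m].
  - change (iter_map g 0 (padd Q e)) with (padd Q e); simpl Nat.div2; rewrite pow_O, Rmult_1_r.
    apply (Rle_trans _ _ _ (dist_orbit_padd_r_sq P Q e)).
    rewrite <- (Rmult_1_l (sqnorm e)) at 1; apply Rmult_le_compat_r; nra.
  - unfold iter_map; rewrite Nat.iter_succ_r; fold (iter_map g m (g (padd Q e))).
    rewrite g_near_Q by lra.
    assert (hVAR : V (AR e) <= c * K * sqnorm e).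
    { pose proof (V_bounds (AR e)); pose proof (AR_bounded e); nra. }
    pose proof (V_ge0 (AR e)).
    assert (hm := decay_near_P (AR e) ltac:(nra) m).
    assert (hpow : l * l ^ Nat.div2 m <= l ^ Nat.div2 (S m)).
    { change (l * l ^ Nat.div2 m) with (l ^ S (Nat.div2 m)).
      apply pow_le_pow_of_le_1; [lra | apply div2_succ_le]. }
    pose proof (pow_le l (Nat.div2 m)).
    apply (Rle_trans _ _ _ hm).
    apply (Rmult_le_reg_l l); [lra |].
    replace (l * (c * c * K / l * l ^ Nat.div2 (S m) * sqnorm e))
      with (c * c * K * sqnorm e * l ^ Nat.div2 (S m)) by (field; lra).
    replace (l * (c * l ^ Nat.div2 m * V (AR e)))
      with (c * V (AR e) * (l * l ^ Nat.div2 m)) by ring.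
    assert (c * V (AR e) <= c * c * K * sqnorm e).
    { replace (c * c * K * sqnorm e) with (c * (c * K * sqnorm e)) by ring.
      apply Rmult_le_compat_l; lra. }
    apply (Rle_trans _ (c * V (AR e) * l ^ Nat.div2 (S m))).
    + apply Rmult_le_compat_l; [nra | exact hpow].
    + apply Rmult_le_compat_r; [apply pow_le |]; lra.
Qed.

Lemma locally_affine_two_cycle_decay : decays_to_orbit g P Q (r / (c * c * K)) (c * c * K / l) l.
Proof.
  pose proof K_ge1; pose proof decay_rate_ge.
  intros z hz n.
  assert (hsmall : c * c * K * dist_orbit z P Q ^ 2 < r).
  { apply (Rmult_lt_compat_r (c * c * K)) in hz; [| nra].
    replace (r / (c * c * K) * (c * c * K)) with r in hz by (field; nra).
    lra. }
  destruct (dist_orbit_cases z P Q) as [e [[-> | ->] he]]; rewrite he in *.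
  - pose proof (V_bounds e); pose proof (sqnorm_ge0 e); pose proof (pow_le l (Nat.div2 n)).
    apply (Rle_trans _ _ _ (decay_near_P e ltac:(nra) n)).
    apply (Rle_trans _ (c * K * l ^ Nat.div2 n * sqnorm e)).
    + replace (c * K * l ^ Nat.div2 n * sqnorm e) with (c * l ^ Nat.div2 n * (K * sqnorm e)) by ring.
      apply Rmult_le_compat_l; [apply Rmult_le_pos |]; lra.
    + apply Rmult_le_compat_r; [| apply Rmult_le_compat_r]; lra.
  - exact (decay_near_Q e hsmall n).
Qed.

Lemma locally_affine_two_cycle_asymptotically_stable : asymptotically_stable_orbit g P Q.
Proof.
  pose proof K_ge1; pose proof decay_rate_ge.
  apply (asymptotically_stable_of_decay _ _ _ (r / (c * c * K)) (c * c * K / l) l);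
    [apply Rdiv_lt_0_compat; nra | nra | lra | apply locally_affine_two_cycle_decay].
Qed.

End LocallyAffineTwoCycle.

Definition qform (s rr a b : R) : R := a ^ 2 + 2 * s * a * b + rr * b ^ 2.

Lemma qform_le s rr a b : s ^ 2 < rr -> qform s rr a b <= (1 + s ^ 2 + rr) * (a ^ 2 + b ^ 2).
Proof.
  intros h; unfold qform.
  pose proof (pow2_ge_0 (s * a - b)); pose proof (pow2_ge_0 a); pose proof (pow2_ge_0 b).
  assert (0 <= rr * a ^ 2) by (apply Rmult_le_pos; nra).
  assert (0 <= s ^ 2 * b ^ 2) by (apply Rmult_le_pos; nra).
  nra.
Qed.

Lemma qform_ge s rr a b : s ^ 2 < rr ->
  (rr - s ^ 2) * (a ^ 2 + b ^ 2) <= (2 * rr + 1) * qform s rr a b.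
Proof.
  intros h.
  replace (qform s rr a b) with ((a + s * b) ^ 2 + (rr - s ^ 2) * b ^ 2) by (unfold qform; ring).
  assert (ha : a ^ 2 <= 2 * (a + s * b) ^ 2 + 2 * s ^ 2 * b ^ 2)
    by (pose proof (pow2_ge_0 (a + 2 * s * b)); nra).
  set (X := (a + s * b) ^ 2) in *; set (q := rr - s ^ 2).
  assert (hq : 0 < q) by (unfold q; lra).
  assert (hX : 0 <= X) by apply pow2_ge_0.
  pose proof (pow2_ge_0 b); pose proof (pow2_ge_0 s).
  assert (0 <= s ^ 2 * X) by (apply Rmult_le_pos; lra).
  assert (0 <= s ^ 2 * b ^ 2 * q) by (apply Rmult_le_pos; [apply Rmult_le_pos |]; lra).
  assert (hr : rr = q + s ^ 2) by (unfold q; ring).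
  clearbody q X; subst rr.
  nra.
Qed.

Lemma companion_qform_decrease T d : -(1 + d) < T < 1 + d -> d < 1 ->
  exists s rr mu, s ^ 2 < rr /\ 0 < mu /\
    forall a b, qform s rr (T * a - d * b) a = qform s rr a b - mu * (a ^ 2 + b ^ 2).
Proof.
  intros hT hd.
  set (s := - T * d / (1 + d)).
  assert (hs : s * (1 + d) = - T * d) by (unfold s; field; lra).
  clearbody s.
  set (c0 := T ^ 2 + 2 * s * T).
  assert (hc0 : c0 * (1 + d) = T ^ 2 * (1 - d)) by (unfold c0; nra).
  assert (hlt : c0 + d ^ 2 < 1).
  { assert (T ^ 2 * (1 - d) < (1 + d) ^ 2 * (1 - d)) by (apply Rmult_lt_compat_r; nra).
    nra. }
  assert (hsd : s ^ 2 <= d ^ 2).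
  { apply (Rmult_le_reg_r ((1 + d) ^ 2)); [nra |].
    replace (s ^ 2 * (1 + d) ^ 2) with ((s * (1 + d)) ^ 2) by ring.
    rewrite hs; replace ((- T * d) ^ 2) with (T ^ 2 * d ^ 2) by ring.
    rewrite (Rmult_comm (d ^ 2)); apply Rmult_le_compat_r; nra. }
  exists s, ((d ^ 2 + 1 - c0) / 2), ((1 - c0 - d ^ 2) / 2).
  split; [lra | split; [lra |]].
  intros a b; unfold qform, c0.
  replace (2 * s * (T * a - d * b) * a) with (2 * s * T * a ^ 2 - 2 * (s * d) * a * b) by ring.
  replace (s * d) with (- T * d - s) by lra.
  field.
Qed.

Lemma companion_lyapunov T d : -(1 + d) < T < 1 + d -> d < 1 ->
  exists (W : R -> R -> R) K l, 0 < l < 1 /\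
    (forall a b, a ^ 2 + b ^ 2 <= W a b <= K * (a ^ 2 + b ^ 2)) /\
    (forall a b, W (T * a - d * b) a <= l * W a b).
Proof.
  intros hT hd.
  destruct (companion_qform_decrease T d hT hd) as (s & rr & mu & hsr & hmu & hdec).
  set (k := (2 * rr + 1) / (rr - s ^ 2)).
  set (K0 := 1 + s ^ 2 + rr).
  assert (hk : 0 < k) by (apply Rdiv_lt_0_compat; nra).
  assert (hmuK0 : mu < K0).
  { (* the decrease identity at (a, b) = (0, 1) reads d ^ 2 = rr - mu *)
    pose proof (qform_ge s rr (T * 0 - d * 1) 0 hsr); rewrite hdec in *.
    unfold qform, K0 in *; nra. }
  exists (fun a b => k * qform s rr a b), (k * K0), (1 - mu / K0).
  assert (hK0 : 0 < K0) by (unfold K0; nra).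
  assert (0 < mu / K0 < 1).
  { split; [apply Rdiv_lt_0_compat; lra |].
    apply (Rmult_lt_reg_r K0); [lra |]; unfold Rdiv; rewrite Rmult_assoc, Rinv_l; lra. }
  split; [lra | split]; intros a b.
  - pose proof (qform_ge s rr a b hsr); pose proof (qform_le s rr a b hsr).
    split.
    + apply (Rmult_le_reg_l (rr - s ^ 2)); [lra |].
      unfold k; replace ((rr - s ^ 2) * ((2 * rr + 1) / (rr - s ^ 2) * qform s rr a b))
        with ((2 * rr + 1) * qform s rr a b) by (field; lra).
      lra.
    + rewrite Rmult_assoc; apply Rmult_le_compat_l; unfold K0; lra.
  - rewrite hdec.
    pose proof (qform_le s rr a b hsr).
    assert (mu / K0 * qform s rr a b <= mu * (a ^ 2 + b ^ 2)).
    { apply (Rmult_le_reg_l K0); [lra |].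
      replace (K0 * (mu / K0 * qform s rr a b)) with (mu * qform s rr a b) by (field; lra).
      unfold K0 in *; nra. }
    nra.
Qed.

Lemma quadratic_lyapunov_2d (M : R * R -> R * R) T d cM :
  -(1 + d) < T < 1 + d -> d < 1 ->
  (forall x, sqnorm (M x) <= cM * sqnorm x) ->
  (forall x, M (M x) = (T * fst (M x) - d * fst x, T * snd (M x) - d * snd x)) ->
  exists V K l, 0 < l < 1 /\
    (forall x, sqnorm x <= V x <= K * sqnorm x) /\ (forall x, V (M x) <= l * V x).
Proof.
  intros hT hd hM hCH.
  destruct (companion_lyapunov T d hT hd) as (W & K & l & hl & hW & hWC).
  assert (hK : 0 <= K) by (pose proof (hW 1 0); nra).
  exists (fun x => W (fst (M x)) (fst x) + W (snd (M x)) (snd x)), (K * (cM + 1)), l.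
  split; [exact hl | split]; intro x.
  - pose proof (hW (fst (M x)) (fst x)); pose proof (hW (snd (M x)) (snd x)).
    pose proof (hM x); pose proof (sqnorm_ge0 (M x)); pose proof (sqnorm_ge0 x).
    unfold sqnorm in *; split; [nra |].
    assert (K * (fst (M x) ^ 2 + snd (M x) ^ 2) <= K * (cM * (fst x ^ 2 + snd x ^ 2)))
      by (apply Rmult_le_compat_l; lra).
    nra.
  - rewrite hCH; simpl.
    pose proof (hWC (fst (M x)) (fst x)); pose proof (hWC (snd (M x)) (snd x)).
    lra.
Qed.

Definition lin (t d : R) (e : R * R) : R * R := (t * fst e + snd e, - d * fst e).

Lemma lin_padd t d p e : lin t d (padd p e) = padd (lin t d p) (lin t d e).
Proof. unfold lin, padd; simpl; f_equal; ring. Qed.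

Lemma sqnorm_lin_le t d e : sqnorm (lin t d e) <= (2 * t ^ 2 + d ^ 2 + 2) * sqnorm e.
Proof.
  unfold sqnorm, lin; simpl.
  pose proof (pow2_ge_0 (t * fst e - snd e)); pose proof (pow2_ge_0 (fst e));
    pose proof (pow2_ge_0 (snd e)); pose proof (pow2_ge_0 t); pose proof (pow2_ge_0 d).
  nra.
Qed.

Lemma lin_pair_bounded t1 d1 t2 d2 : exists c, 1 <= c /\
  (forall e, sqnorm (lin t1 d1 e) <= c * sqnorm e) /\ (forall e, sqnorm (lin t2 d2 e) <= c * sqnorm e).
Proof.
  exists (Rmax (2 * t1 ^ 2 + d1 ^ 2 + 2) (2 * t2 ^ 2 + d2 ^ 2 + 2)).
  split; [| split]; [| intro e ..].
  - pose proof (Rmax_l (2 * t1 ^ 2 + d1 ^ 2 + 2) (2 * t2 ^ 2 + d2 ^ 2 + 2)); nra.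
  - apply (Rle_trans _ _ _ (sqnorm_lin_le t1 d1 e)).
    apply Rmult_le_compat_r; [apply sqnorm_ge0 | apply Rmax_l].
  - apply (Rle_trans _ _ _ (sqnorm_lin_le t2 d2 e)).
    apply Rmult_le_compat_r; [apply sqnorm_ge0 | apply Rmax_r].
Qed.

Lemma lin_comp_cayley_hamilton tL dL tR dR x :
  let M e := lin tR dR (lin tL dL e) in
  M (M x) = ((tL * tR - dL - dR) * fst (M x) - dL * dR * fst x,
             (tL * tR - dL - dR) * snd (M x) - dL * dR * snd x).
Proof. unfold lin; simpl; f_equal; ring. Qed.

Lemma bcnf_left tL dL tR dR z : fst z <= 0 -> bcnf tL dL tR dR z = padd (1, 0) (lin tL dL z).
Proof.
  destruct z as [x y]; simpl; intros hx; unfold bcnf, padd, lin; simpl.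
  destruct (Rle_dec x 0); [f_equal; ring | lra].
Qed.

Lemma bcnf_right tL dL tR dR z : 0 < fst z -> bcnf tL dL tR dR z = padd (1, 0) (lin tR dR z).
Proof.
  destruct z as [x y]; simpl; intros hx; unfold bcnf, padd, lin; simpl.
  destruct (Rle_dec x 0); [lra | f_equal; ring].
Qed.

Lemma padd_assoc p q e : padd (padd p q) e = padd p (padd q e).
Proof. unfold padd; simpl; f_equal; ring. Qed.

Lemma bcnf_near_left tL dL tR dR P e : fst P < 0 -> sqnorm e < fst P ^ 2 ->
  bcnf tL dL tR dR (padd P e) = padd (padd (1, 0) (lin tL dL P)) (lin tL dL e).
Proof.
  intros hP he.
  rewrite bcnf_left, lin_padd, padd_assoc; [reflexivity |].
  unfold sqnorm in he; simpl; pose proof (pow2_ge_0 (snd e)); nra.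
Qed.

Lemma bcnf_near_right tL dL tR dR Q e : 0 < fst Q -> sqnorm e < fst Q ^ 2 ->
  bcnf tL dL tR dR (padd Q e) = padd (padd (1, 0) (lin tR dR Q)) (lin tR dR e).
Proof.
  intros hQ he.
  rewrite bcnf_right, lin_padd, padd_assoc; [reflexivity |].
  unfold sqnorm in he; simpl; pose proof (pow2_ge_0 (snd e)); nra.
Qed.

Lemma bcnf_det_pos tL dL tR dR : tL > Rabs (dL + 1) -> tR < - Rabs (dR + 1) ->
  0 < (1 + dL) * (1 + dR) - tL * tR.
Proof.
  intros hL hR.
  destruct (Rabs_def2 _ _ hL); destruct (Rabs_def2 (dR + 1) (- tR) ltac:(lra)).
  assert (0 < (tL - (dL + 1)) * (- tR - (dR + 1))) by (apply Rmult_lt_0_compat; lra).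
  assert (0 < (tL + (dL + 1)) * (- tR + (dR + 1))) by (apply Rmult_lt_0_compat; lra).
  nra.
Qed.

Lemma bcnf_affine_two_cycle tL dL tR dR : tL > Rabs (dL + 1) -> tR < - Rabs (dR + 1) ->
  exists P Q, fst P < 0 /\ 0 < fst Q /\
    padd (1, 0) (lin tL dL P) = Q /\ padd (1, 0) (lin tR dR Q) = P.
Proof.
  intros hL hR.
  pose proof (bcnf_det_pos tL dL tR dR hL hR) as hD.
  destruct (Rabs_def2 _ _ hL); destruct (Rabs_def2 (dR + 1) (- tR) ltac:(lra)).
  set (D := (1 + dL) * (1 + dR) - tL * tR) in *.
  set (p := (1 + dR + tR) / D); set (q := (1 + dL + tL) / D).
  exists (p, - dR * q), (q, - dL * p); simpl.
  assert (0 < / D) by (apply Rinv_0_lt_compat; lra).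
  split; [unfold p, Rdiv; nra | split; [unfold q, Rdiv; nra |]].
  unfold padd, lin; simpl.
  split; f_equal; try ring; unfold p, q, D in *; field; lra.
Qed.

Lemma bcnf_LR_cycle tL dL tR dR P Q : fst P < 0 -> 0 < fst Q ->
  padd (1, 0) (lin tL dL P) = Q -> padd (1, 0) (lin tR dR Q) = P ->
  LR_cycle (bcnf tL dL tR dR) P Q.
Proof.
  intros hP hQ hPQ hQP.
  repeat split; try lra.
  - rewrite bcnf_left by lra; exact hPQ.
  - rewrite bcnf_right by lra; exact hQP.
  - intros ->; lra.
Qed.

Theorem proposition4p1 (tL dL tR dR : R)
  (hL : tL > Rabs (dL + 1))
  (hR : tR < - Rabs (dR + 1))
  (hdelta : dL * dR < 1)
  (halpha : tL * tR + (dL - 1) * (dR - 1) > 0) :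
  exists P Q : R * R,
    LR_cycle (bcnf tL dL tR dR) P Q /\
    asymptotically_stable_orbit (bcnf tL dL tR dR) P Q.
Proof.
  destruct (bcnf_affine_two_cycle tL dL tR dR hL hR) as (P & Q & hP & hQ & hPQ & hQP).
  destruct (lin_pair_bounded tL dL tR dR) as (c & hc & hcL & hcR).
  assert (jury : -(1 + dL * dR) < tL * tR - dL - dR < 1 + dL * dR).
  { pose proof (bcnf_det_pos tL dL tR dR hL hR); split; nra. }
  destruct (quadratic_lyapunov_2d (fun e => lin tR dR (lin tL dL e)) _ _ (c * c) jury hdelta)
    as (V & K & l & hl & hV & hVM).
  { intro x; pose proof (hcR (lin tL dL x)); pose proof (hcL x); nra. }
  { intro x; apply lin_comp_cayley_hamilton. }
  exists P, Q; split; [exact (bcnf_LR_cycle tL dL tR dR P Q hP hQ hPQ hQP) |].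
  assert (hr : 0 < Rmin (fst P ^ 2) (fst Q ^ 2)) by (apply Rmin_glb_lt; nra).
  apply (locally_affine_two_cycle_asymptotically_stable _ P Q (lin tL dL) (lin tR dR) V
           (Rmin (fst P ^ 2) (fst Q ^ 2)) c K l); try assumption; intros e he.
  - rewrite bcnf_near_left, hPQ; [reflexivity | lra |].
    apply (Rlt_le_trans _ _ _ he), Rmin_l.
  - rewrite bcnf_near_right, hQP; [reflexivity | lra |].
    apply (Rlt_le_trans _ _ _ he), Rmin_r.
Qed.
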